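(* Let $G$ and $H$ be connected graphs, each with at least two vertices. Then $$\rho_o(G\square H)\geq \max\{\rho(G)\rho_o(H),\ \rho(H)\rho_o(G),\ \eta_H\rho_o(G)+\eta_G^H,\ \eta_G\rho_o(H)+\eta_H^G\},$$ where $\eta_G=\lceil(\mathrm{diam}(G)+1)/3\rceil$ and $\eta_G^H=1$ if $G\neq K_2$ and $\mathrm{diam}(H)\equiv 2 \pmod 3$, and $\eta_G^H=0$ otherwise (and symmetrically for $\eta_H$, $\eta_H^G$).
   Context: All graphs are finite and simple. A set $P\subseteq V(G)$ is a packing of $G$ if $N[u]\cap N[v]=\emptyset$ for all distinct $u,v\in P$ ($N[u]$ the closed neighborhood); $\rho(G)$ is the maximum size of a packing. A set $P$ is an open packing if the open neighborhoods $N(u)$, $u\in P$, are pairwise disjoint; $\rho_o(G)$ is the maximum size of an open packing. $\mathrm{diam}(G)$ is the diameter. The Cartesian product $G\square H$ has vertex set $V(G)\times V(H)$, with $(g,h)$ adjacent to $(g',h')$ iff ($gg'\in E(G)$ and $h=h'$) or ($g=g'$ and $hh'\in E(H)$). *)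

(* A finite simple graph is a finType T with a symmetric,
   irreflexive adjacency relation e : rel T. *)
From mathcomp Require Import all_boot.
Set Implicit Arguments.
Unset Strict Implicit.
Unset Printing Implicit Defensive.

Section Graphs.
Variable T : finType.
Variable e : rel T.

Definition simple_graph : Prop := symmetric e /\ irreflexive e.

Definition connected_graph : Prop := forall x y : T, connect e x y.

Definition onbhd (u : T) : {set T} := [set w | e u w].
Definition cnbhd (u : T) : {set T} := [set w | (w == u) || e u w].

Definition packing (P : {set T}) : bool :=
  [forall u in P, forall v in P, (u != v) ==> [disjoint cnbhd u & cnbhd v]].
Definition open_packing (P : {set T}) : bool :=
  [forall u in P, forall v in P, (u != v) ==> [disjoint onbhd u & onbhd v]].

Definition rho : nat := \max_(P : {set T} | packing P) #|P|.
Definition rho_o : nat := \max_(P : {set T} | open_packing P) #|P|.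

Definition walkb (x y : T) (n : nat) : bool :=
  [exists p : n.-tuple T, path e x p && (last x p == y)].

(* distance: least n with a walk of length n (any shortest walk has length
   < #|T|); equals #|T| if y is unreachable from x *)
Definition dist (x y : T) : nat := find (walkb x y) (iota 0 #|T|).

Definition diam : nat := \max_(x : T) \max_(y : T) dist x y.

Definition isK2 : bool := (#|T| == 2) && [forall x : T, forall y : T, (x != y) ==> e x y].
End Graphs.

Definition ceil_div (a b : nat) : nat := (a + b.-1) %/ b.

Definition eta (T : finType) (e : rel T) : nat := ceil_div (diam e).+1 3.

Definition eta2 (T : finType) (e : rel T) (S : finType) (f : rel S) : nat :=
  if ~~ isK2 e && (diam f %% 3 == 2) then 1 else 0.

Definition cart (T S : finType) (e : rel T) (f : rel S) : rel (T * S) :=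
  fun a b => (e a.1 b.1 && (a.2 == b.2)) || ((a.1 == b.1) && f a.2 b.2).

From mathcomp Require Import all_boot zify.
Set Implicit Arguments.
Unset Strict Implicit.
Unset Printing Implicit Defensive.

(* Every bound is witnessed by an explicit open packing Q of G □ H, checked
   through a local criterion (cart_open_packing): two distinct vertices of Q
   may not share a G-neighbour inside a common H-layer, may not be adjacent in
   both coordinates, and may not share an H-neighbour inside a common G-layer.
   - rho(G) rho_o(H): Q = P x O for a packing P of G and an open packing O of H.
   - eta_H rho_o(G) + eta_G^H: take a diametral geodesic y_0 ... y_d of H and
     Q = O x {y_0, y_3, y_6, ...} for an open packing O of G; on a geodesic,
     positions 3i and 3j are at distance >= 3|i-j|, so they are neither equal,
     adjacent, nor at distance 2 unless i = j.  When d = 2 (mod 3) the end y_d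
     is at distance >= 2 from every chosen y_3i, and one more vertex (z, y_d)
     can be added for any z outside O; such a z exists unless O = V(G), which
     for a connected graph on >= 2 vertices forces G = K_2.
   The two remaining bounds follow by the symmetry G □ H ≅ H □ G. *)

Lemma bigmax_card_attained (T : finType) (P : pred {set T}) :
  P set0 -> exists2 A, P A & \max_(B | P B) #|B| = #|A|.
Proof.
move=> P0; have [|A PA ->] := @eq_bigmax_cond _ P (fun B => #|B|).
  by apply/card_gt0P; exists set0.
by exists A.
Qed.

Section Packings.
Variables (T : finType) (e : rel T).

Lemma packing_eq (P : {set T}) u v c : packing e P -> u \in P -> v \in P ->
  c \in cnbhd e u -> c \in cnbhd e v -> u = v.
Proof.
move=> /forallP/(_ u)/implyP PP Pu Pv Cu Cv; apply/eqP/negPn/negP => Huv.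
move: (PP Pu) => /forallP/(_ v)/implyP/(_ Pv)/implyP/(_ Huv) D.
by rewrite (disjointFr D Cu) in Cv.
Qed.

Lemma open_packing_eq (P : {set T}) u v c : open_packing e P ->
  u \in P -> v \in P -> e u c -> e v c -> u = v.
Proof.
move=> /forallP/(_ u)/implyP PP Pu Pv Cu Cv; apply/eqP/negPn/negP => Huv.
move: (PP Pu) => /forallP/(_ v)/implyP/(_ Pv)/implyP/(_ Huv) D.
by move: (disjointFr D (x := c)); rewrite !inE Cu Cv => /(_ isT).
Qed.

Lemma rho_attained : exists2 P, packing e P & rho e = #|P|.
Proof. by apply: bigmax_card_attained; apply/forallP => u; rewrite in_set0. Qed.

Lemma rho_o_attained : exists2 P, open_packing e P & rho_o e = #|P|.
Proof. by apply: bigmax_card_attained; apply/forallP => u; rewrite in_set0. Qed.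

Lemma rho_o_ge (P : {set T}) : open_packing e P -> #|P| <= rho_o e.
Proof. exact: (@leq_bigmax_cond _ (open_packing e) (fun P => #|P|)). Qed.

(* If the whole vertex set is an open packing, every vertex has at most one
   neighbour, so a connected graph on at least two vertices is K_2. *)
Lemma open_packing_setT_K2 : simple_graph e -> connected_graph e ->
  2 <= #|T| -> open_packing e [set: T] -> isK2 e.
Proof.
move=> [esym eirr] Hc T2 HO.
have [x _] : exists x : T, x \in T by apply/card_gt0P; apply: ltnW.
have [y Hy] : exists y, y \in predC1 x.
  by apply/card_gt0P; rewrite cardC1; case: #|T| T2 => [|[|n]].
have [x' Hxx'] : exists x', e x x'.
  case/connectP: (Hc x y) => [[|x' q]] /=; last by case/andP; exists x'.
  by move=> _ Exy; rewrite !inE Exy eqxx in Hy.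
have nbr_uniq w u v : e w u -> e w v -> u = v.
  by rewrite ![e w _]esym => Hu Hv; apply: (open_packing_eq HO _ _ Hu Hv).
set A := [set x; x'].
have A_closed u v : u \in A -> e u v -> v \in A.
  rewrite !inE => /orP[] /eqP-> Huv.
  - by rewrite (nbr_uniq _ _ _ Huv Hxx') eqxx orbT.
  - by rewrite (nbr_uniq _ _ _ Huv (_ : e x' x)) ?eqxx // esym.
have walk_in q u : path e u q -> u \in A -> last u q \in A.
  elim: q u => //= v q IH u /andP[Huv Hq] Hu.
  exact: IH Hq (A_closed _ _ Hu Huv).
have inA w : w \in A.
  by case/connectP: (Hc x w) => r Hr ->; apply: walk_in Hr _; rewrite setU11.
have Hxne : x != x' by apply: contraTneq Hxx' => ->; rewrite eirr.
apply/andP; split.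
  rewrite -cardsT; have -> : [set: T] = A by apply/setP => w; rewrite inE inA.
  by rewrite cards2 Hxne.
apply/forallP => u; apply/forallP => v; apply/implyP.
by move: (inA u) (inA v); rewrite !inE => /orP[]/eqP-> /orP[]/eqP->;
  rewrite ?eqxx // esym.
Qed.

End Packings.

Section Walks.
Variables (T : finType) (e : rel T).

Lemma walkbP x y n :
  reflect (exists p : seq T, [/\ size p = n, path e x p & last x p = y])
          (walkb e x y n).
Proof.
apply: (iffP existsP) => [[t /andP[Hp /eqP Hl]] | [p [Hs Hp Hl]]].
  by exists (tval t); split => //; exact: size_tuple.
have Hs' : size p == n by apply/eqP.
by exists (Tuple Hs'); rewrite /= Hp Hl eqxx.
Qed.

Lemma walk0 u : walkb e u u 0.
Proof. by apply/walkbP; exists [::]. Qed.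

Lemma walk1 u v : e u v -> walkb e u v 1.
Proof. by move=> Huv; apply/walkbP; exists [:: v]; rewrite /= Huv. Qed.

Lemma walk2 u c v : e u c -> e c v -> walkb e u v 2.
Proof. by move=> H1 H2; apply/walkbP; exists [:: c; v]; rewrite /= H1 H2. Qed.

Lemma walkb_sym x y n : symmetric e -> walkb e x y n -> walkb e y x n.
Proof.
move=> e_sym /walkbP[p [<- Hp <-]]; apply/walkbP; exists (rev (belast x p)).
split; first by rewrite size_rev size_belast.
  by rewrite rev_path (eq_path (e' := e)).
have := congr1 rev (lastI x p); rewrite rev_cons rev_rcons.
by move/(congr1 (last (last x p))); rewrite last_rcons /= => E; exact: esym E.
Qed.

Lemma dist_min x y m : walkb e x y m -> m < #|T| -> dist e x y <= m.
Proof.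
move=> Hw Hm; rewrite /dist leqNgt; apply/negP => Hlt.
by have := before_find 0 Hlt; rewrite nth_iota // add0n Hw.
Qed.

Lemma dist_lt x y m : m < dist e x y -> ~~ walkb e x y m.
Proof.
move=> H; have Hle : dist e x y <= #|T|.
  by have := find_size (walkb e x y) (iota 0 #|T|); rewrite size_iota.
have := before_find 0 H; rewrite nth_iota; first by rewrite add0n => ->.
exact: leq_trans H Hle.
Qed.

Lemma connect_dist x y : connect e x y -> dist e x y < #|T|.
Proof.
case/connectP => p Hp ->; case: (shortenP Hp) => p' Hp' Hu _.
have Hs : size p' < #|T| by have := max_card (mem (x :: p')); rewrite (card_uniqP Hu).
by apply: leq_ltn_trans (dist_min _ Hs) Hs; apply/walkbP; exists p'.
Qed.

Lemma dist_walk x y : dist e x y < #|T| -> walkb e x y (dist e x y).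
Proof.
move=> H; have Hh : has (walkb e x y) (iota 0 #|T|) by rewrite has_find size_iota.
by have := nth_find 0 Hh; rewrite nth_iota ?add0n.
Qed.

Lemma diametral_geodesic : connected_graph e -> 0 < #|T| ->
  exists x (p : seq T), [/\ path e x p, size p = diam e &
    forall m, m < size p -> ~~ walkb e x (last x p) m].
Proof.
move=> Hc T0.
have [x0 Ex] := eq_bigmax (fun x => \max_y dist e x y) T0.
have [y0 Ey] := eq_bigmax (fun y => dist e x0 y) T0.
have Ed : diam e = dist e x0 y0 := etrans Ex Ey.
case/walkbP: (dist_walk (connect_dist (Hc x0 y0))) => p [Hsz Hp Hl].
by exists x0, p; split; rewrite ?Ed // Hsz Hl => m; apply: dist_lt.
Qed.

End Walks.

Section Geodesic.
Variables (S : finType) (f : rel S) (x : S) (p : seq S).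
Hypothesis p_path : path f x p.
Hypothesis p_shortest : forall m, m < size p -> ~~ walkb f x (last x p) m.

Definition geo_vertex (i : nat) : S := last x (take i p).

Lemma geo_vertex_end : geo_vertex (size p) = last x p.
Proof. by rewrite /geo_vertex take_size. Qed.

Lemma geodesic_gap i j k : j <= size p ->
  walkb f (geo_vertex i) (geo_vertex j) k -> j - i <= k.
Proof.
move=> Hj /walkbP[q [Hq Hpq Hlq]]; case: (leqP j i) => [|Hij]; first by lia.
rewrite leqNgt; apply/negP => Hlt.
apply: (negP (p_shortest (m := i + k + (size p - j)) _)); first by lia.
apply/walkbP; exists (take i p ++ q ++ drop j p); split.
- by rewrite !size_cat size_takel ?size_drop; lia.
- have Hd : path f (geo_vertex j) (drop j p).
    by move: p_path; rewrite -{1}(cat_take_drop j p) cat_path => /andP[].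
  by rewrite !cat_path take_path //= -/(geo_vertex i) Hpq /= Hlq.
- by rewrite !last_cat -/(geo_vertex i) Hlq /geo_vertex -last_cat cat_take_drop.
Qed.

Lemma geodesic_dist i j k : symmetric f -> i <= size p -> j <= size p ->
  walkb f (geo_vertex i) (geo_vertex j) k -> j - i <= k /\ i - j <= k.
Proof.
move=> fsym Hi Hj W; split; first exact: geodesic_gap W.
exact: geodesic_gap (walkb_sym fsym W).
Qed.

Lemma geodesic_mul3_eq i j k : symmetric f -> 3 * i <= size p -> 3 * j <= size p ->
  k <= 2 -> walkb f (geo_vertex (3 * i)) (geo_vertex (3 * j)) k -> i = j.
Proof.
move=> fsym Hi Hj Hk W; have [] := geodesic_dist fsym Hi Hj W.
by lia.
Qed.

End Geodesic.

Section Cartesian.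
Variables (T S : finType) (e : rel T) (f : rel S).
Hypotheses (e_simple : simple_graph e) (f_simple : simple_graph f).

Definition cart_separated (a b : T * S) : Prop :=
  [/\ a.2 = b.2 -> forall c, e a.1 c -> e b.1 c -> False,
      e a.1 b.1 -> f a.2 b.2 -> False &
      a.1 = b.1 -> forall c, f a.2 c -> f b.2 c -> False].

Lemma cart_separated_sym a b : cart_separated a b -> cart_separated b a.
Proof.
case: e_simple f_simple => esym _ [fsym _] [H1 H2 H3]; split.
- by move=> E c C1 C2; apply: (H1 _ c).
- by move=> E1 E2; apply: H2; rewrite 1?esym 1?fsym.
- by move=> E c C1 C2; apply: (H3 _ c).
Qed.

Lemma cart_open_packing (P : {set T * S}) :
  (forall a b, a \in P -> b \in P -> a != b -> cart_separated a b) ->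
  open_packing (cart e f) P.
Proof.
case: e_simple f_simple => esym _ [fsym _] H.
apply/forallP => a; apply/implyP => Ha; apply/forallP => b; apply/implyP => Hb.
apply/implyP => /(H a b Ha Hb) [H1 H2 H3].
rewrite disjoint_subset; apply/subsetP => c; rewrite !inE /cart.
case/orP => [/andP[Hac /eqP Eac]|/andP[/eqP Eac Hac]]; apply/negP;
  case/orP => [/andP[Hbc /eqP Ebc]|/andP[/eqP Ebc Hbc]].
- by apply: (H1 _ c.1) => //; rewrite Eac Ebc.
- by apply: H2; rewrite ?Ebc // Eac fsym.
- by apply: H2; rewrite ?Ebc // Eac esym.
- by apply: (H3 _ c.2) => //; rewrite Eac Ebc.
Qed.

Lemma rho_mul_rho_o : rho e * rho_o f <= rho_o (cart e f).
Proof.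
case: e_simple => _ eirr.
have [P HP ->] := rho_attained e; have [O HO ->] := rho_o_attained f.
rewrite -cardsX; apply/rho_o_ge/cart_open_packing.
move=> [a1 a2] [b1 b2]; rewrite !inE /= => /andP[Pa Oa] /andP[Pb Ob] Hab.
split => /=.
- move=> E c C1 C2; apply: (negP Hab); rewrite E.
  by rewrite (packing_eq (c := c) HP Pa Pb) // !inE ?C1 ?C2 orbT.
- move=> E1 _; have Eab : a1 = b1.
    by apply: (packing_eq (c := b1) HP Pa Pb); rewrite !inE ?E1 ?eqxx ?orbT.
  by rewrite Eab eirr in E1.
- move=> E c C1 C2; apply: (negP Hab); rewrite E.
  by rewrite (open_packing_eq HO Oa Ob C1 C2).
Qed.

End Cartesian.

Lemma cart_swap (T S : finType) (e : rel T) (f : rel S) a c :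
  cart e f (a.2, a.1) c = cart f e a (c.2, c.1).
Proof.
case: a c => a1 a2 [c1 c2]; rewrite /cart /=.
by case: (e a2 c1); case: (f a1 c2); case: (a1 == c2); case: (a2 == c1).
Qed.

Lemma rho_o_cart_swap (T S : finType) (e : rel T) (f : rel S) :
  rho_o (cart f e) <= rho_o (cart e f).
Proof.
have [P HP ->] := rho_o_attained (cart f e).
have swap_inj : injective (fun a : S * T => (a.2, a.1)) by move=> [? ?] [? ?] [-> ->].
rewrite -(card_imset _ swap_inj); apply: rho_o_ge.
apply/forallP => u; apply/implyP => /imsetP [a Ha ->].
apply/forallP => v; apply/implyP => /imsetP [b Hb ->].
apply/implyP => Hab; rewrite disjoint_subset; apply/subsetP => c.
rewrite !inE => C1; apply/negP => C2; apply: (negP Hab).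
have -> // : a = b.
by apply: (open_packing_eq (c := (c.2, c.1)) HP Ha Hb); rewrite -cart_swap.
Qed.

Section Layers.
Variables (T S : finType) (e : rel T) (f : rel S).
Hypotheses (e_simple : simple_graph e) (f_simple : simple_graph f).
Variables (x : S) (p : seq S) (O : {set T}) (K : nat).
Hypothesis p_path : path f x p.
Hypothesis p_shortest : forall m, m < size p -> ~~ walkb f x (last x p) m.
Hypothesis O_open : open_packing e O.
Hypothesis K_fits : forall k : 'I_K, 3 * k <= size p.

Definition layer_vertex (gk : T * 'I_K) : T * S :=
  (gk.1, geo_vertex x p (3 * gk.2)).
Definition layer_set : {set T * S} := layer_vertex @: setX O [set: 'I_K].

Lemma layer_close (i j : 'I_K) k : k <= 2 ->
  walkb f (geo_vertex x p (3 * i)) (geo_vertex x p (3 * j)) k -> i = j.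
Proof.
by move=> Hk W; apply/val_inj/(geodesic_mul3_eq p_path p_shortest f_simple.1
  (K_fits i) (K_fits j) Hk W).
Qed.

Lemma card_layer_set : #|layer_set| = #|O| * K.
Proof.
rewrite card_in_imset ?cardsX ?cardsT ?card_ord // => -[g i] [g' j] _ _ [-> E].
by rewrite (@layer_close i j 0) // E walk0.
Qed.

(* Distinct vertices of layer_set are separated: in a common H-layer they come
   from distinct members of O, otherwise their H-coordinates are >= 3 apart. *)
Lemma layer_separated a b : a \in layer_set -> b \in layer_set -> a != b ->
  cart_separated e f a b.
Proof.
case: f_simple => fsym firr.
move=> /imsetP[[g i] /setXP[Og _] ->] /imsetP[[g' j] /setXP[Og' _] ->] /= Hab.
split => /=.
- move=> E c C1 C2; apply: (negP Hab).
  rewrite /layer_vertex (open_packing_eq O_open Og Og' C1 C2).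
  by rewrite (@layer_close i j 0) // E walk0.
- move=> _ E2; have Eij := @layer_close i j 1 isT (walk1 E2).
  by rewrite Eij firr in E2.
- move=> E c C1 C2; apply: (negP Hab); rewrite /layer_vertex E.
  by rewrite (@layer_close i j 2) // (walk2 C1) // fsym.
Qed.

Lemma layer_set_open : open_packing (cart e f) layer_set.
Proof. exact: cart_open_packing layer_separated. Qed.

Lemma layer_set_extend z : z \notin O -> (forall k : 'I_K, 3 * k + 2 <= size p) ->
  open_packing (cart e f) ((z, last x p) |: layer_set).
Proof.
move=> Hz K_fits2; case: f_simple => fsym _.
have end_far (g : T) (i : 'I_K) : g \in O ->
    cart_separated e f (z, last x p) (layer_vertex (g, i)).
  move=> Og; rewrite -geo_vertex_end.
  have gap k W := geodesic_dist p_path p_shortest fsym (leqnn (size p)) (K_fits i) (k := k) W.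
  split => /=.
  - move=> E c _ _; move: (walk0 f (geo_vertex x p (size p))).
    by rewrite {2}E => /gap[]; have := K_fits2 i; lia.
  - by move=> _ /walk1/gap[]; have := K_fits2 i; lia.
  - by move=> E; rewrite E Og in Hz.
apply: cart_open_packing => // a b; rewrite !in_setU1.
case/orP => [/eqP -> | Ha]; case/orP => [/eqP -> | Hb] Hab.
- by rewrite eqxx in Hab.
- by case/imsetP: Hb => -[g i] /setXP[Og _] ->; apply: end_far.
- by apply: cart_separated_sym => //; case/imsetP: Ha => -[g i] /setXP[Og _] ->;
    apply: end_far.
- exact: layer_separated.
Qed.

End Layers.

Lemma eta_rho_o_bound (T S : finType) (e : rel T) (f : rel S) :
  simple_graph e -> simple_graph f -> connected_graph e -> connected_graph f ->
  2 <= #|T| -> 2 <= #|S| ->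
  eta f * rho_o e + eta2 e f <= rho_o (cart e f).
Proof.
move=> He Hf Hce Hcf T2 S2.
have [O HO ->] := rho_o_attained e.
have [x [p [Hp Hsz Hshort]]] := diametral_geodesic Hcf (ltnW S2).
have K_fits (k : 'I_(eta f)) : 3 * k <= size p.
  by have := ltn_ord k; rewrite Hsz /eta /ceil_div; lia.
have Hcard := card_layer_set Hf O Hp Hshort K_fits.
rewrite /eta2; case: ifP => [/andP[notK2 Hmod] | _]; last first.
  by rewrite addn0 mulnC -Hcard; exact/rho_o_ge/layer_set_open.
have [z Hz] : exists z, z \notin O.
  apply/existsP; apply: contraNT notK2 => /existsPn allO.
  apply: open_packing_setT_K2 => //.
  by have <- : O = [set: T] by apply/setP => w; rewrite inE; apply/negPn/allO.
have K_fits2 (k : 'I_(eta f)) : 3 * k + 2 <= size p.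
  by have := ltn_ord k; move/eqP: Hmod; rewrite Hsz /eta /ceil_div; lia.
have Hnew : (z, last x p) \notin layer_set x p O (eta f).
  by apply/imsetP => -[[g i] /setXP[Og _] [Ez _]]; rewrite Ez Og in Hz.
apply: leq_trans (rho_o_ge (layer_set_extend He Hf Hp Hshort HO K_fits Hz K_fits2)).
by rewrite cardsU1 Hnew Hcard mulnC addnC.
Qed.

Theorem theorem4 (T : finType) (e : rel T) (S : finType) (f : rel S) :
  simple_graph e -> simple_graph f ->
  connected_graph e -> connected_graph f ->
  2 <= #|T| -> 2 <= #|S| ->
  maxn (maxn (rho e * rho_o f) (rho f * rho_o e))
       (maxn (eta f * rho_o e + eta2 e f) (eta e * rho_o f + eta2 f e))
  <= rho_o (cart e f).
Proof.
move=> He Hf Hce Hcf T2 S2.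
rewrite !geq_max rho_mul_rho_o // eta_rho_o_bound //=.
rewrite (leq_trans (rho_mul_rho_o Hf He) (rho_o_cart_swap _ _)) //.
exact: leq_trans (eta_rho_o_bound Hf He Hcf Hce S2 T2) (rho_o_cart_swap _ _).
Qed.
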